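(* Let $p\ge1$ and let $\kappa_{m+1/2}$, $m\in\mathbb Z$, be real, $p$-periodic in $m$. Consider a $p$-member ensemble on $N$ patches (cyclic patch index, spacing $H$), each patch with $n\ge1$ interior points (with $n$ arbitrary, not necessarily a multiple of $p$), with field values $u^I_{i,\ell}(t)$, $i=1,\dots,n$, $\ell=0,\dots,p-1$, evolving by $$d^2\partial_t u^I_{i,\ell}=\kappa_{i+\ell+\frac12}(u^I_{i+1,\ell}-u^I_{i,\ell})+\kappa_{i+\ell-\frac12}(u^I_{i-1,\ell}-u^I_{i,\ell}),$$ (subscripts of $\kappa$ modulo $p$). Let real scalar coefficients $\mathcal I^{IJ}_{n1},\mathcal I^{IJ}_{1n}$ satisfy $\mathcal I^{IJ}_{1n}=\mathcal I^{JI}_{n1}$ for all $I,J$ (as for the spectral or Lagrangian interpolation coefficients). Couple the patches across ensemble members by $$u^I_{0,m}=\sum_J\mathcal I^{IJ}_{1n}\,u^J_{n,(m-n)\bmod p},\qquad u^I_{n+1,m}=\sum_J\mathcal I^{IJ}_{n1}\,u^J_{1,(m+n)\bmod p},\qquad m=0,\dots,p-1,$$ so that each edge value is interpolated from a member whose corresponding next-to-edge diffusivity is the same. Then the resulting linear system $\partial_t\mathbf u=\mathcal L\mathbf u$ on all interior values $\mathbf u\in\mathbb R^{nNp}$ has a real symmetric (self-adjoint) matrix $\mathcal L$.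
   Context: Member $\ell$ of the ensemble is the heterogeneous lattice diffusion with diffusivities phase-shifted by $\ell$: in member $\ell$, the diffusivity between lattice points $i$ and $i+1$ is $\kappa_{i+\ell+1/2}$; thus the left-edge diffusivity of member $m$ is $\kappa_{m+1/2}$ and the right-edge diffusivity of member $m$ is $\kappa_{n+m+1/2}$. *)

From mathcomp Require Import all_boot all_order all_algebra.
Set Implicit Arguments. Unset Strict Implicit. Unset Printing Implicit Defensive.
Import Order.TTheory GRing.Theory Num.Theory.
Local Open Scope ring_scope.

(* Index of an interior value u^I_{i,l}: patch I : 'I_N, interior point
   i : 'I_n (0-based: i stands for the paper's point i+1 in 1..n),
   ensemble member l : 'I_p. *)
Definition idx (N n p : nat) : finType := ('I_N * 'I_n * 'I_p)%type.

Section Ensemble.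
Variables (R : realFieldType) (N n p : nat).
Variable (kap : int -> R).            (* kap m = kappa_{m+1/2} *)
Variables (In1 I1n : 'I_N -> 'I_N -> R).
Variable (d : R).

(* value u^I_{k,l} of an interior point with 0-based nat indices k < n, l < p
   (0 outside range, never used there) *)
Definition uval (u : idx N n p -> R) (I : 'I_N) (k l : nat) : R :=
  match (insub k : option 'I_n), (insub l : option 'I_p) with
  | Some k', Some l' => u (I, k', l')
  | _, _ => 0
  end.

(* extended field u^I_{k,l}, k = 0..n+1 (1-based, the paper's indexing);
   edge values k = 0, n+1 given by the cross-member coupling *)
Definition ext (u : idx N n p -> R) (I : 'I_N) (k : nat) (l : 'I_p) : R :=
  if k == 0%N then
    \sum_(J < N) I1n I J * uval u J n.-1 `|((l%:Z - n%:Z) %% p%:Z)%Z|%N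
  else if k == n.+1 then
    \sum_(J < N) In1 I J * uval u J 0 `|((l%:Z + n%:Z) %% p%:Z)%Z|%N
  else uval u I k.-1 l.

Definition rhs (u : idx N n p -> R) (a : idx N n p) : R :=
  let: (P, i, l) := a in
  let k := (val i).+1 in
  (d ^+ 2)^-1 *
    (kap (k%:Z + (val l)%:Z) * (ext u P k.+1 l - ext u P k l)
     + kap (k%:Z + (val l)%:Z - 1) * (ext u P k.-1 l - ext u P k l)).

End Ensemble.

From mathcomp Require Import all_boot all_order all_algebra.
From mathcomp Require Import zify ring.
Import Order.TTheory GRing.Theory Num.Theory.
Local Open Scope ring_scope.

(* The right-hand side [rhs u] is linear in the field [u], so it is given by
   the matrix  L a b := rhs (delta b) a,  where [delta b] is the b-th unit
   vector; it remains to show that this matrix is symmetric.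
   Then we show linearity, compute the entry [rhs (delta b) a] explicitly as
   an in-patch three-point stencil plus a right-edge and a left-edge coupling
   term, and prove symmetry: the stencil is symmetric because the diffusivity
   between points i and i+1 appears in both rows, and the left-edge coupling
   of (P,1,l) with (Q,n,m) equals the right-edge coupling of (Q,n,m) with
   (P,1,l) because  I1n = In1^T,  the member maps are inverse, and the two
   diffusivities  kappa_{l+1/2}  and  kappa_{n+m+1/2}  agree by periodicity. *)

Lemma periodic_addmul {T : Type} {p : nat} {f : int -> T}
  (hf : forall m : int, f (m + p%:Z) = f m) (q y : int) :
  f (y + q * p%:Z) = f y.
Proof.
have hnat (k : nat) z : f (z + k%:Z * p%:Z) = f z.
  elim: k z => [|k IH] z; first by rewrite mul0r addr0.
  by rewrite -addn1 PoszD mulrDl mul1r addrA hf IH.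
case: q => k; first exact: hnat.
by rewrite -(hnat k.+1) -addrA -mulrDl NegzE addNr mul0r addr0.
Qed.

Lemma periodic_modz {T : Type} {p : nat} {f : int -> T}
  (hf : forall m : int, f (m + p%:Z) = f m) (y : int) :
  f (y %% p%:Z)%Z = f y.
Proof. by rewrite {2}(divz_eq y p%:Z) addrC periodic_addmul. Qed.

Lemma absz_modz (p : nat) (x : int) : (0 < p)%N ->
  (`|(x %% p%:Z)%Z|%N)%:Z = (x %% p%:Z)%Z.
Proof. by move=> hp; rewrite abszE ger0_norm // modz_ge0 // eqz_nat -lt0n. Qed.

(* Member of the source of the left edge value, resp. the right edge value,
   of member l (as in the coupling rule of [ext]). *)
Definition left_source (p n l : nat) : nat := `|((l%:Z - n%:Z) %% p%:Z)%Z|%N.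
Definition right_source (p n m : nat) : nat := `|((m%:Z + n%:Z) %% p%:Z)%Z|%N.

Lemma left_source_inverse (p n l m : nat) : (0 < p)%N -> (l < p)%N -> (m < p)%N ->
  (left_source p n l == m) = (right_source p n m == l).
Proof.
move=> hp hl hm; rewrite /left_source /right_source -!eqz_nat !absz_modz //.
have mod_eq (x : int) (k : nat) : (k < p)%N ->
    ((x %% p%:Z)%Z == k%:Z) = (p%:Z %| x - k%:Z)%Z.
  by move=> hk; rewrite -eqz_mod_dvd [(k%:Z %% _)%Z]modz_small //; lia.
rewrite !mod_eq // !dvdzE.
have -> : m%:Z + n%:Z - l%:Z = - (l%:Z - n%:Z - m%:Z) by ring.
by rewrite abszN.
Qed.

Section Ensemble.
Variables (R : realFieldType) (N n p : nat).
Variables (In1 I1n : 'I_N -> 'I_N -> R).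

Definition delta (b x : idx N n p) : R := (x == b)%:R.

Lemma sum_mul_indicator (T : finType) (u : T -> R) (x : T) :
  \sum_b u b * (x == b)%:R = u x.
Proof.
rewrite (bigD1 x) //= eqxx mulr1 big1 ?addr0 // => b /negPf.
by rewrite eq_sym => ->; rewrite mulr0.
Qed.

Lemma uval_decomp (u : idx N n p -> R) J k l :
  uval u J k l = \sum_b u b * uval (delta b) J k l.
Proof.
rewrite /uval; case: (insub k : option 'I_n) => [k'|];
  case: (insub l : option 'I_p) => [l'|];
  by rewrite ?sum_mul_indicator // big1 // => b _; rewrite mulr0.
Qed.

Lemma interpolation_decomp (c : 'I_N -> R) (u : idx N n p -> R) k l :
  \sum_J c J * uval u J k l = \sum_b u b * \sum_J c J * uval (delta b) J k l.
Proof.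
under eq_bigr do rewrite uval_decomp mulr_sumr.
rewrite exchange_big; apply: eq_bigr => b _; rewrite mulr_sumr.
by apply: eq_bigr => J _; rewrite mulrCA.
Qed.

Lemma ext_decomp (u : idx N n p -> R) P k l :
  ext In1 I1n u P k l = \sum_b u b * ext In1 I1n (delta b) P k l.
Proof.
by rewrite /ext; case: ifP => _; last case: ifP => _;
  rewrite ?interpolation_decomp ?uval_decomp.
Qed.

Lemma rhs_decomp (kap : int -> R) d (u : idx N n p -> R) a :
  rhs kap In1 I1n d u a = \sum_b u b * rhs kap In1 I1n d (delta b) a.
Proof.
case: a => [[P i] l] /=.
rewrite !(ext_decomp u) -!sumrB !mulr_sumr -big_split mulr_sumr /=.
by apply: eq_bigr => b _; rewrite mulrCA; congr (_ * _); ring.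
Qed.

Lemma uval_delta (Q : 'I_N) (j : 'I_n) (m : 'I_p) J k l :
  uval (delta (Q, j, m)) J k l = ((J == Q) && (k == j) && (l == m))%:R.
Proof.
rewrite /uval /delta; case: (insubP 'I_n k) => [k' _ ek|hk];
  case: (insubP 'I_p l) => [l' _ el|hl] //=.
- by rewrite -ek -el !xpair_eqE.
- by case: (l =P m) hl => [->|]; rewrite ?ltn_ord ?andbF.
- by case: (k =P j) hk => [->|]; rewrite ?ltn_ord ?andbF.
- by case: (k =P j) hk => [->|]; rewrite ?ltn_ord ?andbF.
Qed.

Lemma interpolate_delta (c : 'I_N -> R) (Q : 'I_N) (j : 'I_n) (m : 'I_p) k l :
  \sum_J c J * uval (delta (Q, j, m)) J k l = c Q * ((k == j) && (l == m))%:R.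
Proof.
under eq_bigr do rewrite uval_delta.
rewrite (bigD1 Q) //= eqxx big1 ?addr0 // => J /negPf ->.
by rewrite mulr0.
Qed.

Lemma ext_delta (Q : 'I_N) (j : 'I_n) (m : 'I_p) P k (l : 'I_p) :
  ext In1 I1n (delta (Q, j, m)) P k l =
     (k == 0)%N%:R * I1n P Q * ((n.-1 == j) && (left_source p n l == m))%:R
   + (k == n.+1)%N%:R * In1 P Q * ((0 == j)%N && (right_source p n l == m))%:R
   + ((P == Q) && (k == j.+1) && (l == m))%:R.
Proof.
rewrite /ext; case: (k =P 0%N) => [->|hk0] /=.
  by rewrite interpolate_delta mul1r !mul0r andbF !addr0.
case: (k =P n.+1) => [->|hk1] /=.
  have -> : (n.+1 == j.+1) = false by apply/negbTE; rewrite eqSS neq_ltn ltn_ord orbT.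
  by rewrite interpolate_delta andbF andFb !mul0r mul1r add0r addr0.
by rewrite uval_delta; case: k hk0 hk1 => // k _ _; rewrite !mul0r !add0r.
Qed.

Variable kap : int -> R.

Definition stencil (i j l : nat) : R :=
  kap (i.+1%:Z + l%:Z) * ((i.+1 == j)%:R - (i == j)%:R)
  + kap (i.+1%:Z + l%:Z - 1) * ((i == j.+1)%:R - (i == j)%:R).

Definition right_coupling (P : 'I_N) (i l : nat) (Q : 'I_N) (j m : nat) : R :=
  In1 P Q * ((i.+1 == n) && (j == 0%N) && (right_source p n l == m))%:R
  * kap (i.+1%:Z + l%:Z).

Definition left_coupling (P : 'I_N) (i l : nat) (Q : 'I_N) (j m : nat) : R :=
  I1n P Q * ((i == 0%N) && (j == n.-1) && (left_source p n l == m))%:R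
  * kap (i.+1%:Z + l%:Z - 1).

Definition entry (a b : idx N n p) : R :=
  let: (P, i, l) := a in let: (Q, j, m) := b in
  ((P == Q) && (l == m))%:R * stencil i j l
  + right_coupling P i l Q j m + left_coupling P i l Q j m.

Lemma rhs_delta d a b :
  rhs kap In1 I1n d (delta b) a = (d ^+ 2)^-1 * entry a b.
Proof.
case: a => [[P i] l]; case: b => [[Q j] m].
rewrite /= !ext_delta /= !eqSS /entry /stencil /right_coupling /left_coupling.
have -> : (val i == n) = false by apply/negbTE; rewrite neq_ltn ltn_ord.
have -> : (val i == n.+1) = false by apply/negbTE; rewrite neq_ltn ltnS (ltnW (ltn_ord i)).
rewrite [(0 == _)%N]eq_sym [(n.-1 == _)%N]eq_sym -!mulnb !natrM !mulr0n.
by congr (_ * _); ring.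
Qed.

(* The stencil is symmetric: the diffusivity between points i and i+1
   multiplies both the (i, i+1) and the (i+1, i) entries. *)
Lemma stencil_sym (i j l : nat) : stencil i j l = stencil j i l.
Proof.
rewrite /stencil; case: (ltngtP i j) => h; last by rewrite h.
- have [-> ->] : (i == j.+1) = false /\ (j.+1 == i) = false by split; apply/eqP; lia.
  rewrite [(j == i.+1)]eq_sym !mulr0n !subr0 !mulr0 !addr0 !add0r.
  case: eqP => [<-|_]; last by rewrite !mulr0n !mulr0.
  by congr (kap _ * _); lia.
- have [-> ->] : (j == i.+1) = false /\ (i.+1 == j) = false by split; apply/eqP; lia.
  rewrite [(i == j.+1)]eq_sym !mulr0n !subr0 !mulr0 !addr0 !add0r.
  case: eqP => [<-|_]; last by rewrite !mulr0n !mulr0.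
  by congr (kap _ * _); lia.
Qed.

Hypothesis hp : (0 < p)%N.
Hypothesis hkap : forall m : int, kap (m + p%:Z) = kap m.
Hypothesis hI : forall I J, I1n I J = In1 J I.

(* The left-edge coupling is the transpose of the right-edge coupling: the
   diffusivity kappa_{l+1/2} next to the left edge of member l equals the
   diffusivity kappa_{n+m+1/2} next to the right edge of its source m. *)
Lemma left_right_coupling (P Q : 'I_N) (i j : 'I_n) (l m : 'I_p) :
  left_coupling P i l Q j m = right_coupling Q j m P i l.
Proof.
rewrite /left_coupling /right_coupling hI left_source_inverse ?ltn_ord //.
have -> : ((val j).+1 == n) = (val j == n.-1).
  by have ltjn := ltn_ord j; apply/eqP/eqP; lia.
rewrite [in RHS](andbC (_ == n.-1)).
case: (val i =P 0%N) => [hi|]; last by rewrite /= !mulr0 !mul0r.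
case: (val j =P n.-1) => [hj|]; last by rewrite /= !mulr0 !mul0r.
case: eqP => [hm|]; last by rewrite /= !mulr0 !mul0r.
congr (_ * _); rewrite hi.
have -> : 1%:Z + (val l)%:Z - 1 = (val l)%:Z by ring.
have -> : (val l)%:Z = right_source p n m by rewrite hm.
rewrite /right_source absz_modz // (periodic_modz hkap).
by move: hj => /= hj; congr kap; have := ltn_ord j; lia.
Qed.

Lemma entry_sym a b : entry a b = entry b a.
Proof.
case: a => [[P i] l]; case: b => [[Q j] m] /=.
rewrite [Q == P]eq_sym [m == l]eq_sym stencil_sym.
have -> : ((P == Q) && (l == m))%:R * stencil j i l
        = ((P == Q) && (l == m))%:R * stencil j i m.
  by have [->|ne] := eqVneq l m; rewrite ?(negbTE ne) ?andbF ?mul0r.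
rewrite left_right_coupling (left_right_coupling Q P j i m l); ring.
Qed.

End Ensemble.

Theorem mainTheorem3 (R : realFieldType) (p n N : nat)
  (hp : (0 < p)%N) (hn : (0 < n)%N)
  (kap : int -> R) (hkap : forall m : int, kap (m + p%:Z) = kap m)
  (In1 I1n : 'I_N -> 'I_N -> R) (hI : forall I J, I1n I J = In1 J I)
  (d : R) (hd : d != 0) :
  exists L : idx N n p -> idx N n p -> R,
    (forall (u : idx N n p -> R) (a : idx N n p),
        rhs kap In1 I1n d u a = \sum_(b : idx N n p) L a b * u b)
    /\ (forall a b : idx N n p, L a b = L b a).
Proof.
exists (fun a b => rhs kap In1 I1n d (delta R N n p b) a); split.
  by move=> u a; rewrite rhs_decomp; apply: eq_bigr => b _; rewrite mulrC.
by move=> a b; rewrite !rhs_delta entry_sym.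
Qed.
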